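(* Let $\varepsilon>0$ and $\delta>0$ be constants. For each $n$, let $f(x)=\sum_{i=1}^n a_i x_i$ be a linear function on $\{0,1\}^n$ with weights $a_1\ge a_2\ge\dots\ge a_n>0$, and let $f^*:=\sum_{i=1}^n a_i$. Consider Algorithm 1 (see context) with an $f$-monotone selection mechanism, bitwise mutation with rate $\chi/n$ where $\chi=\Omega(1)$, and population size $\lambda\ge n^{2+\delta}$. Let $T$ be the smallest $t$ such that the population $P_t$ satisfies $$\sum_{j=1}^{\lambda} f(P_t(j))\le \lambda\,\frac{f^*}{2}(1-\varepsilon).$$ Then there exists a constant $c>0$ such that $\Pr[T\le e^{cn}]=e^{-\Omega(n^{\delta})}$.
   Context: Algorithm 1 (non-elitist EA): the search space is $\mathcal X=\{0,1\}^n$; the initial population $P_0\in\mathcal X^\lambda$ is sampled uniformly at random. In each generation $t=0,1,2,\dots$, the new population $P_{t+1}$ is formed by $\lambda$ independent repetitions of: sample an index $I=\mathrm{sel}(P_t)\in[\lambda]$ by the selection mechanism, and set the offspring to $\mathrm{mutate}(P_t(I))$. A population is a vector $P\in\mathcal X^\lambda$, $P(i)$ its $i$-th individual. A selection mechanism is given by probabilities $p_{\mathrm{sel}}(i\mid P)$ over $[\lambda]$; it is $f$-monotone if for all $P$ and $i,j\in[\lambda]$: $p_{\mathrm{sel}}(i\mid P)\ge p_{\mathrm{sel}}(j\mid P)\iff f(P(i))\ge f(P(j))$. Bitwise mutation with rate $\chi/n$ flips each bit independently with probability $\chi/n$, i.e. $p_{\mathrm{mut}}(y\mid x)=(\chi/n)^{H(x,y)}(1-\chi/n)^{n-H(x,y)}$,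 $H$ the Hamming distance. Asymptotic notation is with respect to $n\to\infty$. *)

(* classical reals. The process is a finite Markov chain on
   populations, so all probabilities are finite sums written out explicitly. *)
From Stdlib Require Import Reals List.
Import ListNotations.
Open Scope R_scope.

Definition sumL {A : Type} (g : A -> R) (l : list A) : R :=
  fold_right (fun x acc => g x + acc) 0 l.

Definition prodL {A : Type} (g : A -> R) (l : list A) : R :=
  fold_right (fun x acc => g x * acc) 1 l.

(* all bit strings of length n ({0,1}^n), bits as bool, bit i = nth i x false *)
Fixpoint all_bits (n : nat) : list (list bool) :=
  match n with
  | O => [ [] ]
  | S m => map (cons false) (all_bits m) ++ map (cons true) (all_bits m)
  end.

Fixpoint tuples {A : Type} (A_l : list A) (k : nat) : list (list A) :=
  match k with
  | O => [ [] ]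
  | S m => flat_map (fun x => map (cons x) (tuples A_l m)) A_l
  end.

Definition bitstring (n : nat) (x : list bool) : Prop := length x = n.
Definition population (n lam : nat) (P : list (list bool)) : Prop :=
  length P = lam /\ forall x, In x P -> bitstring n x.

Definition all_pops (n lam : nat) : list (list (list bool)) :=
  tuples (all_bits n) lam.

(* the i-th individual P(i) (0-based: i < lambda) *)
Definition ind (P : list (list bool)) (i : nat) : list bool := nth i P [].

Definition b2R (b : bool) : R := if b then 1 else 0.

(* linear function f(x) = sum_{i=1}^n a_i x_i; weight a_i is (a (i-1)) *)
Definition linf (n : nat) (a : nat -> R) (x : list bool) : R :=
  sumL (fun i => a i * b2R (nth i x false)) (seq 0 n).

Definition fstar (n : nat) (a : nat -> R) : R := sumL a (seq 0 n).

Definition hamming (n : nat) (x y : list bool) : nat :=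
  length (filter (fun i => negb (Bool.eqb (nth i x false) (nth i y false))) (seq 0 n)).

Definition pmut (n : nat) (chi : R) (x y : list bool) : R :=
  (chi / INR n) ^ (hamming n x y) * (1 - chi / INR n) ^ (n - hamming n x y).

(* a selection mechanism: psel P i = p_sel(i | P), for i < lambda *)
Definition selection := list (list bool) -> nat -> R.

Definition valid_selection (n lam : nat) (psel : selection) : Prop :=
  forall P, population n lam P ->
    (forall i, (i < lam)%nat -> 0 <= psel P i) /\
    sumL (psel P) (seq 0 lam) = 1.

Definition f_monotone (n lam : nat) (f : list bool -> R) (psel : selection) : Prop :=
  forall P, population n lam P ->
    forall i j, (i < lam)%nat -> (j < lam)%nat ->
      (psel P i >= psel P j <-> f (ind P i) >= f (ind P j)).

Definition offspring_prob (n lam : nat) (chi : R) (psel : selection)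
    (P : list (list bool)) (y : list bool) : R :=
  sumL (fun i => psel P i * pmut n chi (ind P i) y) (seq 0 lam).

(* transition kernel of Algorithm 1: lambda independent offspring *)
Definition trans (n lam : nat) (chi : R) (psel : selection)
    (P Q : list (list bool)) : R :=
  prodL (fun y => offspring_prob n lam chi psel P y) Q.

Definition low_pop (n lam : nat) (a : nat -> R) (eps : R)
    (P : list (list bool)) : Prop :=
  sumL (fun j => linf n a (ind P j)) (seq 0 lam)
    <= INR lam * (fstar n a / 2) * (1 - eps).

(* hit k P = Pr[ T <= k | P_0 = P ], defined by the standard recursion *)
Fixpoint hit (n lam : nat) (a : nat -> R) (eps chi : R) (psel : selection)
    (k : nat) (P : list (list bool)) : R :=
  if Rle_dec (sumL (fun j => linf n a (ind P j)) (seq 0 lam))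
             (INR lam * (fstar n a / 2) * (1 - eps))
  then 1
  else match k with
       | O => 0
       | S k' => sumL (fun Q => trans n lam chi psel P Q
                                * hit n lam a eps chi psel k' Q)
                      (all_pops n lam)
       end.

(* Pr[T <= k] with P_0 uniform over ({0,1}^n)^lambda *)
Definition prob_T_le (n lam : nat) (a : nat -> R) (eps chi : R)
    (psel : selection) (k : nat) : R :=
  sumL (fun P => / (2 ^ (n * lam)) * hit n lam a eps chi psel k P)
       (all_pops n lam).

(* With r = chi/n, e = min(eps, 1) and s = e r / (8 f^* ), consider the potential
   W(P) = prod_(x in P) exp(s (f^*/2 - f(x))) = exp(s (lambda f^*/2 - sum_j f(P(j)))).
   Offspring are i.i.d.: by f-monotonicity (Chebyshev's sum inequality) the parent's expected
   fitness is at least the population average m, and mutation maps it to (1 - 2r) m + r f^*,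
   so a Hoeffding-type bound gives E[W(P_(t+1))] <= W(P_t) + K with K = exp(lambda e^2 r / 32).
   The uniform initial population is mutation at rate 1/2, so E[W(P_0)] <= K as well.
   A population below the threshold has W >= exp(lambda e^2 r / 16), hence by Markov's
   inequality and a union bound Pr[T <= k] <= (k+1)^2 exp(-lambda e^2 r / 32), while
   lambda r >= chi n^(1+delta). *)

From Stdlib Require Import Reals List Lra Lia.
Open Scope R_scope.

Lemma exp_le_compat x y : x <= y -> exp x <= exp y.
Proof.
  intros [Hlt | ->]; [left; apply exp_increasing, Hlt | right; reflexivity].
Qed.

Lemma exp_pow x m : exp x ^ m = exp (INR m * x).
Proof.
  induction m as [|m IH]; [simpl; rewrite Rmult_0_l, exp_0; reflexivity|].
  rewrite <- tech_pow_Rmult, IH, S_INR, <- exp_plus. f_equal; ring.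
Qed.

Lemma sumL_app {A} (g : A -> R) l1 l2 : sumL g (l1 ++ l2) = sumL g l1 + sumL g l2.
Proof. induction l1 as [|x l1 IH]; simpl; [|rewrite IH]; ring. Qed.

Lemma sumL_ext {A} (g h : A -> R) l :
  (forall x, In x l -> g x = h x) -> sumL g l = sumL h l.
Proof.
  induction l as [|x l IH]; intros H; simpl; [reflexivity|].
  rewrite H, IH; auto with datatypes.
Qed.

Lemma sumL_le {A} (g h : A -> R) l :
  (forall x, In x l -> g x <= h x) -> sumL g l <= sumL h l.
Proof.
  induction l as [|x l IH]; intros H; simpl; [lra|].
  apply Rplus_le_compat; auto with datatypes.
Qed.

Lemma sumL_plus {A} (g h : A -> R) l : sumL (fun x => g x + h x) l = sumL g l + sumL h l.
Proof. induction l as [|x l IH]; simpl; [|rewrite IH]; ring. Qed.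

Lemma sumL_scal {A} c (g : A -> R) l : sumL (fun x => c * g x) l = c * sumL g l.
Proof. induction l as [|x l IH]; simpl; [|rewrite IH]; ring. Qed.

Lemma sumL_const {A} c (l : list A) : sumL (fun _ => c) l = INR (length l) * c.
Proof.
  induction l as [|x l IH]; simpl length; [simpl; ring|].
  rewrite S_INR; simpl; rewrite IH; ring.
Qed.

Lemma sumL_nonneg {A} (g : A -> R) l : (forall x, In x l -> 0 <= g x) -> 0 <= sumL g l.
Proof.
  intros H. rewrite <- (Rmult_0_r (INR (length l))), <- sumL_const.
  apply sumL_le, H.
Qed.

Lemma sumL_map {A B} (g : B -> R) (h : A -> B) l :
  sumL g (map h l) = sumL (fun x => g (h x)) l.
Proof. induction l as [|x l IH]; simpl; [|rewrite IH]; reflexivity. Qed.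

Lemma sumL_flat_map {A B} (g : B -> R) (h : A -> list B) l :
  sumL g (flat_map h l) = sumL (fun x => sumL g (h x)) l.
Proof. induction l as [|x l IH]; simpl; [|rewrite sumL_app, IH]; reflexivity. Qed.

Lemma sumL_swap {A B} (g : A -> B -> R) l l' :
  sumL (fun x => sumL (g x) l') l = sumL (fun y => sumL (fun x => g x y) l) l'.
Proof.
  induction l as [|x l IH]; simpl.
  - induction l' as [|y l' IH]; simpl; [|rewrite <- IH]; ring.
  - rewrite IH, <- sumL_plus. reflexivity.
Qed.

Lemma sumL_seq_nth {A} d (g : A -> R) l :
  sumL (fun j => g (nth j l d)) (seq 0 (length l)) = sumL g l.
Proof.
  induction l as [|x l IH]; simpl; [reflexivity|].
  rewrite <- seq_shift, sumL_map, IH. reflexivity.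
Qed.

Lemma prodL_ext {A} (g h : A -> R) l :
  (forall x, In x l -> g x = h x) -> prodL g l = prodL h l.
Proof.
  induction l as [|x l IH]; intros H; simpl; [reflexivity|].
  rewrite H, IH; auto with datatypes.
Qed.

Lemma prodL_mult {A} (g h : A -> R) l : prodL (fun x => g x * h x) l = prodL g l * prodL h l.
Proof. induction l as [|x l IH]; simpl; [|rewrite IH]; ring. Qed.

Lemma prodL_const {A} c (l : list A) : prodL (fun _ => c) l = c ^ length l.
Proof. induction l as [|x l IH]; simpl; [|rewrite IH]; ring. Qed.

Lemma prodL_nonneg {A} (g : A -> R) l : (forall x, In x l -> 0 <= g x) -> 0 <= prodL g l.
Proof.
  induction l as [|x l IH]; intros H; simpl; [lra|].
  apply Rmult_le_pos; auto with datatypes.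
Qed.

Lemma exp_sumL {A} (g : A -> R) l : exp (sumL g l) = prodL (fun x => exp (g x)) l.
Proof.
  induction l as [|x l IH]; simpl; [apply exp_0|].
  rewrite exp_plus, IH. reflexivity.
Qed.

Lemma in_tuples {A} (l : list A) m Q :
  In Q (tuples l m) -> length Q = m /\ forall y, In y Q -> In y l.
Proof.
  revert Q; induction m as [|m IH]; simpl; intros Q HQ.
  - destruct HQ as [<- | []]; split; [reflexivity | intros y []].
  - apply in_flat_map in HQ as [x [Hx HQ]]. apply in_map_iff in HQ as [Q' [<- HQ']].
    destruct (IH _ HQ') as [Hlen Hin]. simpl; split; [congruence|].
    intros y [<- | Hy]; auto.
Qed.

Lemma sumL_tuples_prodL {A} (g : A -> R) l m : sumL (prodL g) (tuples l m) = sumL g l ^ m.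
Proof.
  induction m as [|m IH]; simpl; [ring|].
  rewrite sumL_flat_map, <- IH, Rmult_comm, <- sumL_scal.
  apply sumL_ext; intros x _. rewrite sumL_map, Rmult_comm, <- sumL_scal. reflexivity.
Qed.

Lemma all_bits_length n y : In y (all_bits n) -> length y = n.
Proof.
  revert y; induction n as [|n IH]; simpl; intros y Hy.
  - destruct Hy as [<- | []]; reflexivity.
  - apply in_app_or in Hy as [Hy | Hy]; apply in_map_iff in Hy as [y' [<- Hy']];
      simpl; f_equal; auto.
Qed.

Lemma all_pops_population n lam P : In P (all_pops n lam) -> population n lam P.
Proof.
  intros HP. apply in_tuples in HP as [Hlen Hin].
  split; [exact Hlen|]. intros x Hx. apply all_bits_length, Hin, Hx.
Qed.

Lemma sumL_all_bits_S n (g : list bool -> R) :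
  sumL g (all_bits (S n)) = sumL (fun y => g (false :: y) + g (true :: y)) (all_bits n).
Proof. simpl all_bits. rewrite sumL_app, !sumL_map, sumL_plus. reflexivity. Qed.

Lemma linf_cons n a b y :
  linf (S n) a (b :: y) = a O * b2R b + linf n (fun i => a (S i)) y.
Proof. unfold linf. simpl seq. simpl sumL. rewrite <- seq_shift, sumL_map. reflexivity. Qed.

Lemma fstar_cons n a : fstar (S n) a = a O + fstar n (fun i => a (S i)).
Proof. unfold fstar. simpl seq. simpl sumL. rewrite <- seq_shift, sumL_map. reflexivity. Qed.

Lemma in_seq0 m i : In i (seq 0 m) -> (i < m)%nat.
Proof. intros Hi. apply in_seq in Hi. lia. Qed.

Lemma linf_bounds n a y :
  (forall i, (i < n)%nat -> 0 <= a i) -> 0 <= linf n a y <= fstar n a.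
Proof.
  intros Ha. unfold linf, fstar.
  split; [apply sumL_nonneg | apply sumL_le]; intros i Hi; apply in_seq0, Ha in Hi;
    unfold b2R; destruct nth; lra.
Qed.

Definition bitflip (r : R) (b c : bool) : R := if Bool.eqb b c then 1 - r else r.

Fixpoint mutate_prob (r : R) (x y : list bool) : R :=
  match x, y with
  | b :: x', c :: y' => bitflip r b c * mutate_prob r x' y'
  | _, _ => 1
  end.

Lemma hamming_cons n b x c y :
  hamming (S n) (b :: x) (c :: y) = ((if Bool.eqb b c then 0 else 1) + hamming n x y)%nat.
Proof.
  unfold hamming. simpl seq. rewrite <- seq_shift. simpl filter.
  assert (Hshift : forall p l, length (filter p (map S l)) = length (filter (fun i => p (S i)) l)).
  { intros p l. induction l as [|i l IH]; simpl; [|destruct (p (S i)); simpl]; auto. }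
  destruct (Bool.eqb b c); simpl; rewrite Hshift; reflexivity.
Qed.

Lemma hamming_le n x y : (hamming n x y <= n)%nat.
Proof. unfold hamming. rewrite <- (length_seq n 0) at 2. apply filter_length_le. Qed.

Lemma pow_hamming_mutate_prob r n x y : length x = n -> length y = n ->
  r ^ hamming n x y * (1 - r) ^ (n - hamming n x y) = mutate_prob r x y.
Proof.
  revert n y; induction x as [|b x IH]; intros n [|c y] Hx Hy; simpl in Hx, Hy; subst n;
    try discriminate.
  - unfold hamming; simpl; ring.
  - injection Hy as Hy. rewrite hamming_cons. simpl mutate_prob.
    rewrite <- (IH (length x) y); auto.
    pose proof (hamming_le (length x) x y). unfold bitflip.
    destruct (Bool.eqb b c); simpl Nat.add.
    + replace (S (length x) - hamming (length x) x y)%nat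
        with (S (length x - hamming (length x) x y)) by lia. simpl; ring.
    + simpl; ring.
Qed.

Lemma pmut_mutate_prob n chi x y : length x = n -> length y = n ->
  pmut n chi x y = mutate_prob (chi / INR n) x y.
Proof. apply pow_hamming_mutate_prob. Qed.

Lemma mutate_prob_nonneg r x y : 0 <= r <= 1 -> 0 <= mutate_prob r x y.
Proof.
  revert y; induction x as [|b x IH]; intros [|c y] Hr; simpl; try lra.
  apply Rmult_le_pos; auto. unfold bitflip; destruct Bool.eqb; lra.
Qed.

Lemma bitflip_sum r b : bitflip r b false + bitflip r b true = 1.
Proof. unfold bitflip; destruct b; simpl; ring. Qed.

Lemma bitflip_true r b : bitflip r b true = (1 - 2 * r) * b2R b + r.
Proof. unfold bitflip, b2R; destruct b; simpl; ring. Qed.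

Lemma mutate_prob_mass r n x : length x = n ->
  sumL (mutate_prob r x) (all_bits n) = 1.
Proof.
  revert x; induction n as [|n IH]; intros [|b x] Hx; simpl in Hx; try discriminate.
  - simpl; ring.
  - rewrite sumL_all_bits_S. simpl mutate_prob.
    rewrite (sumL_ext _ (fun y => 1 * mutate_prob r x y)), sumL_scal, IH; auto; [ring|].
    intros y _. rewrite <- (bitflip_sum r b). ring.
Qed.

Lemma mutate_prob_mean_linf r n a x : length x = n ->
  sumL (fun y => mutate_prob r x y * linf n a y) (all_bits n)
  = (1 - 2 * r) * linf n a x + r * fstar n a.
Proof.
  revert a x; induction n as [|n IH]; intros a [|b x] Hx; simpl in Hx; try discriminate.
  - unfold linf, fstar; simpl; ring.
  - injection Hx as Hx. rewrite sumL_all_bits_S, linf_cons, fstar_cons.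
    set (a' := fun i => a (S i)).
    rewrite (sumL_ext _ (fun y => mutate_prob r x y * linf n a' y
                                   + (bitflip r b true * a O) * mutate_prob r x y)).
    + rewrite sumL_plus, sumL_scal, IH, mutate_prob_mass, bitflip_true; auto. ring.
    + intros y _. simpl mutate_prob. rewrite !linf_cons.
      replace (bitflip r b false) with (1 - bitflip r b true)
        by (pose proof (bitflip_sum r b); lra).
      simpl b2R. fold a'. ring.
Qed.

Lemma mutate_prob_half x y : length x = length y -> mutate_prob (1/2) x y = (/2) ^ length x.
Proof.
  revert y; induction x as [|b x IH]; intros [|c y] H; simpl in *; try discriminate; [reflexivity|].
  rewrite IH by congruence. unfold bitflip; destruct Bool.eqb; field.
Qed.

Lemma chebyshev_sum (p f : nat -> R) (I : list nat) :
  (forall i j, In i I -> In j I -> 0 <= (p i - p j) * (f i - f j)) ->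
  sumL p I = 1 -> sumL f I <= INR (length I) * sumL (fun i => p i * f i) I.
Proof.
  intros Hsim Hp.
  set (N := INR (length I)). set (Spf := sumL (fun i => p i * f i) I). set (Sf := sumL f I).
  assert (Hrow : forall i, sumL (fun j => (p i - p j) * (f i - f j)) I
                           = N * (p i * f i) + Spf + (- p i) * Sf + (- f i) * 1).
  { intros i. rewrite <- Hp. unfold N, Spf, Sf.
    rewrite <- sumL_const, <- !sumL_scal, <- !sumL_plus. apply sumL_ext; intros; ring. }
  assert (Hdouble : sumL (fun i => sumL (fun j => (p i - p j) * (f i - f j)) I) I
                    = 2 * N * Spf - 2 * Sf).
  { rewrite (sumL_ext _ (fun i => (N * (p i * f i) + Spf) + (- Sf * p i + -1 * f i)))
      by (intros i _; rewrite Hrow; ring).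
    rewrite !sumL_plus, !sumL_scal, sumL_const, Hp. fold Sf Spf N. ring. }
  assert (0 <= sumL (fun i => sumL (fun j => (p i - p j) * (f i - f j)) I) I)
    by (apply sumL_nonneg; intros; apply sumL_nonneg; auto).
  lra.
Qed.

Lemma ind_length n lam P i : population n lam P -> (i < lam)%nat -> length (ind P i) = n.
Proof. intros [Hlen Hin] Hi. apply Hin, nth_In. lia. Qed.

Section Offspring.

Variables (n lam : nat) (chi : R) (psel : selection) (P : list (list bool)).
Hypothesis HP : population n lam P.
Hypothesis Hvalid : valid_selection n lam psel.
Hypothesis Hrate : 0 <= chi / INR n <= 1.

Let mutate_ind i y := mutate_prob (chi / INR n) (ind P i) y.

Lemma sumL_offspring_prob (g : list bool -> R) :
  sumL (fun y => offspring_prob n lam chi psel P y * g y) (all_bits n)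
  = sumL (fun i => psel P i * sumL (fun y => mutate_ind i y * g y) (all_bits n)) (seq 0 lam).
Proof.
  unfold offspring_prob.
  rewrite (sumL_ext _ (fun y => sumL (fun i => psel P i * (mutate_ind i y * g y)) (seq 0 lam))).
  - rewrite sumL_swap. apply sumL_ext; intros i _. apply sumL_scal.
  - intros y Hy. rewrite Rmult_comm, <- sumL_scal. apply sumL_ext; intros i Hi.
    apply in_seq0 in Hi. unfold mutate_ind.
    rewrite pmut_mutate_prob by eauto using ind_length, all_bits_length. ring.
Qed.

Lemma offspring_prob_nonneg y : In y (all_bits n) -> 0 <= offspring_prob n lam chi psel P y.
Proof.
  intros Hy. apply sumL_nonneg; intros i Hi. apply in_seq0 in Hi.
  apply Rmult_le_pos; [apply (Hvalid P HP), Hi|].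
  rewrite pmut_mutate_prob by eauto using ind_length, all_bits_length.
  apply mutate_prob_nonneg, Hrate.
Qed.

Lemma offspring_prob_mass : sumL (offspring_prob n lam chi psel P) (all_bits n) = 1.
Proof.
  rewrite (sumL_ext _ (fun y => offspring_prob n lam chi psel P y * 1)) by (intros; ring).
  rewrite sumL_offspring_prob. transitivity (sumL (psel P) (seq 0 lam)); [|apply Hvalid, HP].
  apply sumL_ext; intros i Hi. apply in_seq0 in Hi.
  rewrite (sumL_ext _ (mutate_ind i)) by (intros; apply Rmult_1_r).
  unfold mutate_ind. rewrite mutate_prob_mass by eauto using ind_length. ring.
Qed.

Lemma offspring_prob_mean_linf a :
  sumL (fun y => offspring_prob n lam chi psel P y * linf n a y) (all_bits n)
  = (1 - 2 * (chi / INR n)) * sumL (fun i => psel P i * linf n a (ind P i)) (seq 0 lam)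
    + chi / INR n * fstar n a.
Proof.
  rewrite sumL_offspring_prob. destruct (Hvalid P HP) as [_ Hmass].
  rewrite (sumL_ext _ (fun i => (1 - 2 * (chi / INR n)) * (psel P i * linf n a (ind P i))
                                + (chi / INR n * fstar n a) * psel P i)).
  - rewrite sumL_plus, !sumL_scal, Hmass. ring.
  - intros i Hi. apply in_seq0 in Hi. unfold mutate_ind.
    rewrite mutate_prob_mean_linf by eauto using ind_length. ring.
Qed.

Lemma trans_nonneg Q : In Q (all_pops n lam) -> 0 <= trans n lam chi psel P Q.
Proof.
  intros HQ. apply in_tuples in HQ as [_ Hin].
  apply prodL_nonneg; intros y Hy. apply offspring_prob_nonneg, Hin, Hy.
Qed.

Lemma trans_mass : sumL (trans n lam chi psel P) (all_pops n lam) = 1.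
Proof.
  etransitivity; [apply (sumL_tuples_prodL (offspring_prob n lam chi psel P))|].
  rewrite offspring_prob_mass. apply pow1.
Qed.

End Offspring.

Lemma monotone_selection_mean n lam a psel P :
  population n lam P -> valid_selection n lam psel -> f_monotone n lam (linf n a) psel ->
  sumL (fun j => linf n a (ind P j)) (seq 0 lam)
  <= INR lam * sumL (fun i => psel P i * linf n a (ind P i)) (seq 0 lam).
Proof.
  intros HP Hvalid Hmono. rewrite <- (length_seq lam 0) at 2.
  apply chebyshev_sum; [|apply (Hvalid P HP)].
  intros i j Hi Hj. apply in_seq0 in Hi, Hj.
  destruct (Rle_or_lt (psel P j) (psel P i)) as [Hij | Hji].
  - assert (linf n a (ind P i) >= linf n a (ind P j)) by (apply (Hmono P HP i j); auto; lra).
    nra.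
  - assert (linf n a (ind P j) >= linf n a (ind P i)) by (apply (Hmono P HP j i); auto; lra).
    nra.
Qed.

Lemma exp_le_quadratic x : -(1/2) <= x <= 1/2 -> exp x <= 1 + x + 2 * x ^ 2.
Proof.
  intros Hx. pose proof (exp_ineq1_le (- x)). pose proof (exp_pos x).
  assert (Hinv : exp x * exp (- x) = 1) by (rewrite <- exp_plus, Rplus_opp_r; apply exp_0).
  apply (Rmult_le_reg_r (1 - x)); [lra|]. nra.
Qed.

(* Hoeffding's lemma, with a crude constant. *)
Lemma exp_moment_bound {T} (L : list T) (nu f : T -> R) (F s c : R) :
  (forall y, In y L -> 0 <= nu y) -> sumL nu L = 1 ->
  (forall y, In y L -> 0 <= f y <= F) -> 0 <= s -> s * F <= 1/2 ->
  sumL (fun y => nu y * exp (s * (c - f y))) L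
  <= exp (s * (c - sumL (fun y => nu y * f y) L) + 2 * s ^ 2 * F ^ 2).
Proof.
  intros Hnu Hmass Hf Hs HsF.
  set (m := sumL (fun y => nu y * f y) L).
  assert (Hm : 0 <= m <= F).
  { split.
    - apply sumL_nonneg; intros y Hy. specialize (Hf y Hy). specialize (Hnu y Hy). nra.
    - rewrite <- (Rmult_1_r F), <- Hmass, <- sumL_scal. apply sumL_le; intros y Hy.
      specialize (Hf y Hy). specialize (Hnu y Hy). nra. }
  assert (Hpoint : forall y, In y L ->
            nu y * exp (s * (c - f y))
            <= exp (s * (c - m)) * (nu y * (1 + s * m - s * f y + 2 * s ^ 2 * F ^ 2))).
  { intros y Hy. specialize (Hf y Hy). specialize (Hnu y Hy).
    replace (s * (c - f y)) with (s * (c - m) + s * (m - f y)) by ring. rewrite exp_plus.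
    assert (exp (s * (m - f y)) <= 1 + s * m - s * f y + 2 * s ^ 2 * F ^ 2).
    { eapply Rle_trans; [apply exp_le_quadratic; nra|].
      assert ((m - f y) ^ 2 <= F ^ 2) by nra. nra. }
    pose proof (exp_pos (s * (c - m))).
    rewrite Rmult_comm, Rmult_assoc.
    apply Rmult_le_compat_l; [lra|]. rewrite Rmult_comm. apply Rmult_le_compat_l; assumption. }
  assert (Hmean : sumL (fun y => nu y * (1 + s * m - s * f y + 2 * s ^ 2 * F ^ 2)) L
                  = 1 + 2 * s ^ 2 * F ^ 2).
  { rewrite (sumL_ext _ (fun y => (1 + s * m + 2 * s ^ 2 * F ^ 2) * nu y + - s * (nu y * f y)))
      by (intros; ring).
    rewrite sumL_plus, !sumL_scal, Hmass. fold m. ring. }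
  eapply Rle_trans; [apply sumL_le, Hpoint|].
  rewrite sumL_scal, Hmean, exp_plus.
  apply Rmult_le_compat_l; [apply Rlt_le, exp_pos | apply exp_ineq1_le].
Qed.

Lemma iid_exp_moment_bound {T} (L : list T) (nu f : T -> R) (F s c : R) m :
  (forall y, In y L -> 0 <= nu y) -> sumL nu L = 1 ->
  (forall y, In y L -> 0 <= f y <= F) -> 0 <= s -> s * F <= 1/2 ->
  sumL (fun Q => prodL nu Q * prodL (fun y => exp (s * (c - f y))) Q) (tuples L m)
  <= exp (INR m * (s * (c - sumL (fun y => nu y * f y) L) + 2 * s ^ 2 * F ^ 2)).
Proof.
  intros Hnu Hmass Hf Hs HsF.
  rewrite (sumL_ext _ (prodL (fun y => nu y * exp (s * (c - f y)))))
    by (intros; symmetry; apply prodL_mult).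
  rewrite sumL_tuples_prodL, <- exp_pow. apply pow_incr. split.
  - apply sumL_nonneg; intros y Hy. apply Rmult_le_pos; [auto | apply Rlt_le, exp_pos].
  - apply exp_moment_bound; assumption.
Qed.

Lemma hit_le_potential n lam a eps chi psel (W : list (list bool) -> R) (K E : R) :
  valid_selection n lam psel -> 0 <= chi / INR n <= 1 ->
  0 <= K -> 0 <= E -> (forall P, 0 <= W P) ->
  (forall P, population n lam P -> low_pop n lam a eps P -> 1 <= W P * E) ->
  (forall P, population n lam P ->
     sumL (fun Q => trans n lam chi psel P Q * W Q) (all_pops n lam) <= W P + K) ->
  forall k P, population n lam P ->
    hit n lam a eps chi psel k P <= (INR k + 1) * (W P + INR k * K) * E.
Proof.
  intros Hvalid Hrate HK HE HW Hlow Hdrift k.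
  induction k as [|k IH]; intros P HP; simpl hit; destruct Rle_dec as [Hhit | _].
  - specialize (Hlow P HP Hhit). simpl INR. lra.
  - specialize (HW P). simpl INR. nra.
  - specialize (Hlow P HP Hhit). specialize (HW P). pose proof (pos_INR k). rewrite S_INR.
    assert (W P <= (INR k + 1 + 1) * (W P + (INR k + 1) * K)) by nra.
    assert (W P * E <= (INR k + 1 + 1) * (W P + (INR k + 1) * K) * E)
      by (apply Rmult_le_compat_r; assumption).
    lra.
  - eapply Rle_trans.
    { apply sumL_le; intros Q HQ. apply Rmult_le_compat_l; [apply (trans_nonneg n lam); auto|].
      apply IH, all_pops_population, HQ. }
    rewrite (sumL_ext _ (fun Q => ((INR k + 1) * E) * (trans n lam chi psel P Q * W Q)
                                  + ((INR k + 1) * INR k * K * E) * trans n lam chi psel P Q))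
      by (intros; ring).
    rewrite sumL_plus, !sumL_scal, (trans_mass n lam), S_INR by assumption.
    pose proof (pos_INR k). specialize (HW P).
    assert (((INR k + 1) * E) * sumL (fun Q => trans n lam chi psel P Q * W Q) (all_pops n lam)
            <= ((INR k + 1) * E) * (W P + K))
      by (apply Rmult_le_compat_l; [nra | apply Hdrift, HP]).
    assert (0 <= E * W P) by nra. assert (0 <= E * K * INR k) by (apply Rmult_le_pos; nra).
    nra.
Qed.

Definition potential (n : nat) (a : nat -> R) (s : R) (Q : list (list bool)) : R :=
  prodL (fun y => exp (s * (fstar n a / 2 - linf n a y))) Q.

Lemma potential_population n lam a s P : population n lam P ->
  potential n a s P
  = exp (s * (INR lam * (fstar n a / 2) - sumL (fun j => linf n a (ind P j)) (seq 0 lam))).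
Proof.
  intros [Hlen _]. unfold potential. rewrite <- exp_sumL. f_equal.
  unfold ind. rewrite <- Hlen, sumL_seq_nth.
  rewrite (sumL_ext _ (fun y => s * (fstar n a / 2) + - s * linf n a y)) by (intros; ring).
  rewrite sumL_plus, sumL_const, sumL_scal. ring.
Qed.

(* Either [D >= lam e F / 8], and the contraction [- 2 r s D] absorbs the variance term,
   or [D] is small and the whole exponent is at most [lam e^2 r / 32]. *)
Lemma exp_drift_split lamR s r e F D :
  0 < s -> s * F = e * r / 8 -> 0 < r <= 1/2 -> 0 < e <= 1 -> 0 < F -> 0 <= lamR ->
  exp (s * (1 - 2 * r) * D + 2 * lamR * s ^ 2 * F ^ 2)
  <= exp (s * D) + exp (lamR * e ^ 2 * r / 32).
Proof.
  intros Hs HsF Hr He HF Hl.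
  assert (Hvar : 2 * lamR * s ^ 2 * F ^ 2 = lamR * e * r * (s * F) / 4)
    by (transitivity (2 * lamR * (s * F) ^ 2); [ring | rewrite HsF; field]).
  pose proof (exp_pos (s * D)). pose proof (exp_pos (lamR * e ^ 2 * r / 32)).
  destruct (Rle_or_lt (lamR * e * F / 8) D) as [HD | HD].
  - enough (exp (s * (1 - 2 * r) * D + 2 * lamR * s ^ 2 * F ^ 2) <= exp (s * D)) by lra.
    apply exp_le_compat. rewrite Hvar.
    assert (r * s * (lamR * e * F / 8) <= r * s * D) by (apply Rmult_le_compat_l; nra).
    nra.
  - enough (exp (s * (1 - 2 * r) * D + 2 * lamR * s ^ 2 * F ^ 2)
            <= exp (lamR * e ^ 2 * r / 32)) by lra.
    apply exp_le_compat.
    assert (Hcontr : s * ((1 - 2 * r) * D) <= s * (lamR * e * F / 8)).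
    { apply Rmult_le_compat_l; [lra|].
      assert (0 <= lamR * e * F) by (apply Rmult_le_pos; [apply Rmult_le_pos|]; lra).
      destruct (Rle_or_lt 0 D); nra. }
    assert (Hr2 : lamR * e ^ 2 * r ^ 2 <= lamR * e ^ 2 * (r / 2))
      by (apply Rmult_le_compat_l; nra).
    assert (Hmid : s * (lamR * e * F / 8) = lamR * e * (e * r / 8) / 8)
      by (rewrite <- HsF; field).
    rewrite Hvar, HsF. nra.
Qed.

Lemma uniform_as_mutation n lam Q : In Q (all_pops n lam) ->
  / 2 ^ (n * lam) = prodL (mutate_prob (1/2) (repeat false n)) Q.
Proof.
  intros HQ. apply in_tuples in HQ as [Hlen Hin].
  rewrite (prodL_ext _ (fun _ => (/2) ^ n)).
  - rewrite prodL_const, Hlen, <- pow_mult, pow_inv. reflexivity.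
  - intros y Hy. rewrite mutate_prob_half, repeat_length; [reflexivity|].
    rewrite repeat_length, (all_bits_length n y); auto.
Qed.

Lemma uniform_mass n lam : sumL (fun _ => / 2 ^ (n * lam)) (all_pops n lam) = 1.
Proof.
  rewrite (sumL_ext _ (prodL (mutate_prob (1/2) (repeat false n))))
    by (intros; apply uniform_as_mutation; assumption).
  unfold all_pops. rewrite sumL_tuples_prodL, mutate_prob_mass by apply repeat_length.
  apply pow1.
Qed.

Section Drift.

Variables (n lam : nat) (a : nat -> R) (chi e : R).
Hypothesis Ha : forall i, (i < n)%nat -> 0 <= a i.
Hypothesis HF : 0 < fstar n a.
Hypothesis Hrate : 0 < chi / INR n <= 1/2.
Hypothesis He : 0 < e <= 1.

Let r := chi / INR n.
Let s := e * r / (8 * fstar n a).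
Let K := exp (INR lam * e ^ 2 * r / 32).

Let Hs : 0 < s.
Proof. unfold s, r. apply Rdiv_lt_0_compat; nra. Qed.

Let HsF : s * fstar n a = e * r / 8.
Proof. unfold s. field. lra. Qed.

Let HsF_half : s * fstar n a <= 1/2.
Proof. rewrite HsF. unfold r. nra. Qed.

Lemma potential_drift psel :
  valid_selection n lam psel -> f_monotone n lam (linf n a) psel ->
  forall P, population n lam P ->
  sumL (fun Q => trans n lam chi psel P Q * potential n a s Q) (all_pops n lam)
  <= potential n a s P + K.
Proof.
  intros Hvalid Hmono P HP.
  assert (Hrate1 : 0 <= chi / INR n <= 1) by lra.
  set (S := sumL (fun j => linf n a (ind P j)) (seq 0 lam)).
  set (Sp := sumL (fun i => psel P i * linf n a (ind P i)) (seq 0 lam)).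
  assert (HS : S <= INR lam * Sp) by (apply monotone_selection_mean; assumption).
  eapply Rle_trans.
  { apply (iid_exp_moment_bound _ _ (linf n a) (fstar n a)).
    - apply (offspring_prob_nonneg n lam); assumption.
    - apply (offspring_prob_mass n lam); assumption.
    - intros y _. apply linf_bounds, Ha.
    - apply Rlt_le, Hs.
    - exact HsF_half. }
  rewrite (offspring_prob_mean_linf n lam) by assumption. fold r Sp.
  rewrite (potential_population n lam) by assumption. fold S.
  eapply Rle_trans;
    [|exact (exp_drift_split (INR lam) s r e (fstar n a) _ Hs HsF Hrate He HF (pos_INR lam))].
  apply exp_le_compat.
  assert (s * (1 - 2 * r) * S <= s * (1 - 2 * r) * (INR lam * Sp)).
  { apply Rmult_le_compat_l; [|exact HS].
    apply Rmult_le_pos; [apply Rlt_le, Hs | unfold r; lra]. }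
  nra.
Qed.

Lemma potential_initial :
  sumL (fun Q => / 2 ^ (n * lam) * potential n a s Q) (all_pops n lam) <= K.
Proof.
  set (x0 := repeat false n).
  assert (Hx0 : length x0 = n) by apply repeat_length.
  rewrite (sumL_ext _ (fun Q => prodL (mutate_prob (1/2) x0) Q * potential n a s Q))
    by (intros Q HQ; rewrite (uniform_as_mutation n lam Q HQ); reflexivity).
  eapply Rle_trans.
  { apply (iid_exp_moment_bound _ _ (linf n a) (fstar n a)).
    - intros; apply mutate_prob_nonneg; lra.
    - apply mutate_prob_mass, Hx0.
    - intros y _. apply linf_bounds, Ha.
    - apply Rlt_le, Hs.
    - exact HsF_half. }
  rewrite mutate_prob_mean_linf by exact Hx0.
  apply exp_le_compat.
  apply Rle_trans with (2 * INR lam * (s * fstar n a) ^ 2); [right; field|].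
  rewrite HsF.
  assert (Hr : 0 < r <= 1/2) by exact Hrate.
  assert (0 <= INR lam * e ^ 2) by (pose proof (pos_INR lam); nra).
  assert (INR lam * e ^ 2 * r ^ 2 <= INR lam * e ^ 2 * r) by (apply Rmult_le_compat_l; nra).
  nra.
Qed.

Lemma potential_low eps : e <= eps ->
  forall P, population n lam P -> low_pop n lam a eps P ->
  1 <= potential n a s P * exp (- (INR lam * e ^ 2 * r / 16)).
Proof.
  intros Heps P HP Hlow. unfold low_pop in Hlow.
  rewrite (potential_population n lam) by exact HP. rewrite <- exp_plus, <- exp_0.
  apply exp_le_compat.
  set (S := sumL (fun j => linf n a (ind P j)) (seq 0 lam)) in *.
  assert (0 <= INR lam * fstar n a) by (pose proof (pos_INR lam); nra).
  assert (INR lam * fstar n a * e / 2 <= INR lam * (fstar n a / 2) - S)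
    by (assert (INR lam * fstar n a * e <= INR lam * fstar n a * eps)
          by (apply Rmult_le_compat_l; lra); lra).
  assert (s * (INR lam * fstar n a * e / 2) <= s * (INR lam * (fstar n a / 2) - S))
    by (apply Rmult_le_compat_l; lra).
  assert (s * (INR lam * fstar n a * e / 2) = INR lam * e * (s * fstar n a) / 2) by field.
  rewrite HsF in *. lra.
Qed.

Lemma prob_T_le_bound eps psel k :
  e <= eps -> valid_selection n lam psel -> f_monotone n lam (linf n a) psel ->
  prob_T_le n lam a eps chi psel k
  <= (INR k + 1) ^ 2 * exp (- (INR lam * e ^ 2 * (chi / INR n) / 32)).
Proof.
  intros Heps Hvalid Hmono.
  set (E := exp (- (INR lam * e ^ 2 * r / 16))).
  assert (Hhit := hit_le_potential n lam a eps chi psel (potential n a s) K E Hvalid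
    ltac:(lra) (Rlt_le _ _ (exp_pos _)) (Rlt_le _ _ (exp_pos _))
    (fun P => prodL_nonneg _ P (fun y _ => Rlt_le _ _ (exp_pos _)))
    (potential_low eps Heps) (potential_drift psel Hvalid Hmono) k).
  unfold prob_T_le. eapply Rle_trans.
  { apply sumL_le; intros P HP. apply Rmult_le_compat_l.
    - apply Rlt_le, Rinv_0_lt_compat, pow_lt; lra.
    - apply Hhit, all_pops_population, HP. }
  rewrite (sumL_ext _ (fun P => ((INR k + 1) * E) * (/ 2 ^ (n * lam) * potential n a s P)
                                + ((INR k + 1) * INR k * K * E) * / 2 ^ (n * lam)))
    by (intros; ring).
  rewrite sumL_plus, (sumL_scal ((INR k + 1) * E)), (sumL_scal ((INR k + 1) * INR k * K * E)),
    uniform_mass.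
  assert (((INR k + 1) * E) * sumL (fun P => / 2 ^ (n * lam) * potential n a s P) (all_pops n lam)
          <= ((INR k + 1) * E) * K).
  { apply Rmult_le_compat_l; [|exact potential_initial].
    apply Rmult_le_pos; [pose proof (pos_INR k); lra | apply Rlt_le, exp_pos]. }
  assert (HKE : K * E = exp (- (INR lam * e ^ 2 * (chi / INR n) / 32)))
    by (unfold K, E; rewrite <- exp_plus; f_equal; change (chi / INR n) with r; field).
  rewrite <- HKE. lra.
Qed.

End Drift.

Lemma fstar_pos n a : (0 < n)%nat -> (forall i, (i < n)%nat -> 0 < a i) -> 0 < fstar n a.
Proof.
  intros Hn Ha. destruct n as [|n]; [lia|]. rewrite fstar_cons.
  assert (0 < a O) by (apply Ha; lia).
  assert (0 <= fstar n (fun i => a (S i))).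
  { apply sumL_nonneg; intros i Hi. apply in_seq0 in Hi. apply Rlt_le, Ha. lia. }
  lra.
Qed.

Lemma mutation_rate_bounds (n : nat) (chi0 chi : R) :
  1 <= INR n -> 0 < chi0 <= chi -> chi <= INR n / 2 -> 0 < chi / INR n <= 1/2.
Proof.
  intros Hn Hchi Hchin. split; [apply Rdiv_lt_0_compat; lra|].
  apply (Rmult_le_reg_r (INR n)); [lra|].
  replace (chi / INR n * INR n) with chi by (field; lra). lra.
Qed.

Lemma mutation_strength_lower (n lam : nat) (chi0 chi delta : R) :
  1 <= INR n -> 0 < chi0 <= chi -> Rpower (INR n) (2 + delta) <= INR lam ->
  chi0 * INR n * Rpower (INR n) delta <= INR lam * (chi / INR n).
Proof.
  intros Hn Hchi Hlam.
  rewrite Rpower_plus, (Rpower_pow 2) in Hlam by lra. simpl in Hlam.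
  set (u := Rpower (INR n) delta) in *.
  assert (0 < u) by apply exp_pos.
  apply (Rmult_le_reg_r (INR n)); [lra|].
  replace (INR lam * (chi / INR n) * INR n) with (INR lam * chi) by (field; lra).
  apply Rle_trans with (INR n * (INR n * 1) * u * chi0); [right; ring|].
  apply Rmult_le_compat; nra.
Qed.

Lemma square_exp_tail (C m u k : R) :
  0 < C -> 1 <= m -> 8 <= C * m -> 1 <= u -> 0 <= k -> k <= exp (C / 8 * m) ->
  (k + 1) ^ 2 * exp (- (C * m * u)) <= exp (- (C / 2 * u)).
Proof.
  intros HC Hm HCm Hu Hk0 Hk.
  assert (Hk1 : k + 1 <= exp (1 + C / 8 * m)).
  { rewrite exp_plus. pose proof (exp_ineq1_le 1). pose proof (exp_pos (C / 8 * m)).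
    assert (1 <= exp (C / 8 * m)) by (rewrite <- exp_0; apply exp_le_compat; nra).
    nra. }
  apply Rle_trans with (exp (1 + C / 8 * m) ^ 2 * exp (- (C * m * u))).
  { apply Rmult_le_compat_r; [apply Rlt_le, exp_pos | apply pow_incr; lra]. }
  rewrite exp_pow, <- exp_plus. apply exp_le_compat.
  assert (C * m <= C * m * u)
    by (rewrite <- (Rmult_1_r (C * m)) at 1; apply Rmult_le_compat_l; lra).
  assert (C * u <= C * m * u) by nra.
  simpl INR. lra.
Qed.

Theorem lemma1 (eps delta chi0 : R) (Heps : 0 < eps) (Hdelta : 0 < delta)
  (Hchi0 : 0 < chi0) :
  exists c : R, 0 < c /\
  exists d : R, 0 < d /\
  exists N : nat,
  forall (n : nat), (N <= n)%nat ->
  forall (a : nat -> R),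
    (forall i, (i < n)%nat -> 0 < a i) ->
    (forall i j, (i <= j)%nat -> (j < n)%nat -> a j <= a i) ->
  forall (chi : R), chi0 <= chi -> chi <= INR n / 2 ->
  forall (lam : nat), Rpower (INR n) (2 + delta) <= INR lam ->
  forall (psel : selection),
    valid_selection n lam psel ->
    f_monotone n lam (linf n a) psel ->
  forall (k : nat), INR k <= exp (c * INR n) ->
    prob_T_le n lam a eps chi psel k <= exp (- d * Rpower (INR n) delta).
Proof.
  set (e := Rmin eps 1).
  assert (He : 0 < e <= 1) by (split; [apply Rmin_glb_lt | apply Rmin_r]; lra).
  assert (Heps_e : e <= eps) by apply Rmin_l.
  set (C := e ^ 2 * chi0 / 32).
  assert (HC : 0 < C) by (unfold C; assert (0 < e ^ 2) by (apply pow_lt; lra); nra).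
  destruct (INR_unbounded (8 / C)) as [N0 HN0].
  exists (C / 8); split; [lra|]. exists (C / 2); split; [lra|]. exists (Nat.max 1 N0).
  intros n Hn a Ha _ chi Hchi Hchin lam Hlam psel Hvalid Hmono k Hk.
  assert (Hn1 : 1 <= INR n) by (apply (le_INR 1); lia).
  assert (HCn : 8 <= C * INR n).
  { assert (INR N0 <= INR n) by (apply le_INR; lia).
    replace 8 with (C * (8 / C)) by (field; lra). apply Rmult_le_compat_l; lra. }
  assert (Hu : 1 <= Rpower (INR n) delta)
    by (rewrite <- (Rpower_O (INR n)) by lra; apply Rle_Rpower; lra).
  pose proof (mutation_strength_lower n lam chi0 chi delta Hn1 (conj Hchi0 Hchi) Hlam).
  eapply Rle_trans.
  { apply (prob_T_le_bound n lam a chi e); auto.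
    - intros i Hi. apply Rlt_le, Ha, Hi.
    - apply fstar_pos; [lia | exact Ha].
    - exact (mutation_rate_bounds n chi0 chi Hn1 (conj Hchi0 Hchi) Hchin). }
  replace (- (C / 2) * Rpower (INR n) delta) with (- (C / 2 * Rpower (INR n) delta)) by ring.
  eapply Rle_trans;
    [|exact (square_exp_tail C (INR n) _ (INR k) HC Hn1 HCn Hu (pos_INR k) Hk)].
  apply Rmult_le_compat_l; [apply pow2_ge_0|].
  apply exp_le_compat. unfold C in *. nra.
Qed.
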